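(* Let $\alpha,\beta\in(0,1)$, and let $u\in C([0,1],L(\mathbb{R}^n,\mathbb{R}^m))$, $v\in\mathcal{C}^\alpha(L(\mathbb{R}^d,\mathbb{R}^n))$ and $w\in\mathcal{C}^\beta(\mathbb{R}^d)$. Then \[ \|\pi_<(u,\pi_<(v,w))-\pi_<(uv,w)\|_{\alpha+\beta}\lesssim\|u\|_\infty\|v\|_\alpha\|w\|_\beta. \]
   Context: Index set: pairs $(p,m)$ with either $p=-1,m=0$, or $p\in\mathbb{N}=\{0,1,2,\dots\}$ and $0\le m\le 2^p$. For $p\in\mathbb{N}$, $1\le m\le 2^p$ set $t^0_{pm}=(m-1)2^{-p}$, $t^1_{pm}=(2m-1)2^{-p-1}$, $t^2_{pm}=m2^{-p}$. Rescaled Haar functions: for $p\in\mathbb{N}$, $1\le m\le 2^p$, $\chi_{pm}=2^p$ on $[t^0_{pm},t^1_{pm})$, $=-2^p$ on $[t^1_{pm},t^2_{pm})$, $=0$ elsewhere; $\chi_{00}\equiv1$; $\chi_{p0}\equiv0$ for $p\ge1$. Rescaled Schauder functions: $\varphi_{pm}(t)=\int_0^t\chi_{pm}(s)\,ds$ for $p\in\mathbb{N}$, and $\varphi_{-10}\equiv1$. For continuous $f:[0,1]\to E$ ($E$ a finite-dimensional normed space), coefficients: $f_{-10}=f(0)$, $f_{00}=f(1)-f(0)$, $f_{p0}=0$ for $p\ge1$, $f_{pm}=2f(t^1_{pm})-f(t^0_{pm})-f(t^2_{pm})$ for $p\in\mathbb{N},m\ge1$. Schauder blocks: $\Delta_pf=\sum_{m=0}^{2^p}f_{pm}\varphi_{pm}$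 ($p\ge-1$), $S_pf=\sum_{q=-1}^p\Delta_qf$. For $\alpha>0$, $\|f\|_\alpha:=\sup_{p,m}2^{p\alpha}|f_{pm}|$ and $\mathcal{C}^\alpha(E):=\{f\in C([0,1],E):\|f\|_\alpha<\infty\}$. Paraproduct: $\pi_<(v,w):=\sum_{p\ge0}S_{p-1}v\,\Delta_pw$ (products are compositions/applications of linear maps). $\|\cdot\|_\infty$ is the sup norm; $\lesssim$ hides a constant depending only on $\alpha,\beta$. *)

From Stdlib Require Import Reals ZArith ClassicalEpsilon.
Open Scope R_scope.

(* Elements of L(R^c, R^r) are r x c real matrices; vectors of R^d are d x 1
   matrices.  Entries outside the dimensions are irrelevant. *)
Definition Mat := nat -> nat -> R.

Fixpoint rsum (n : nat) (f : nat -> R) : R :=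
  match n with O => 0 | S n' => rsum n' f + f n' end.

Fixpoint rmaxn (n : nat) (f : nat -> R) : R :=
  match n with O => 0 | S n' => Rmax (rmaxn n' f) (f n') end.

Definition madd (A B : Mat) : Mat := fun i j => A i j + B i j.
Definition msub (A B : Mat) : Mat := fun i j => A i j - B i j.
Definition mscal (a : R) (A : Mat) : Mat := fun i j => a * A i j.
Definition mzero : Mat := fun _ _ => 0.
Definition mmul (k : nat) (A B : Mat) : Mat :=
  fun i j => rsum k (fun l => A i l * B l j).
Definition msum (N : nat) (F : nat -> Mat) : Mat :=
  fun i j => rsum N (fun q => F q i j).

(* Norm on L(R^c,R^r): the operator norm induced by the sup norms on R^c and
   R^r (max absolute row sum).  For c = 1 it is the sup norm on R^r. *)
Definition mnorm (r c : nat) (A : Mat) : R :=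
  rmaxn r (fun i => rsum c (fun j => Rabs (A i j))).

Definition cont01 (r c : nat) (f : R -> Mat) : Prop :=
  forall i j, (i < r)%nat -> (j < c)%nat ->
  forall t, 0 <= t <= 1 -> forall eps, eps > 0 ->
    exists delta, delta > 0 /\
      forall s, 0 <= s <= 1 -> Rabs (s - t) < delta ->
        Rabs (f s i j - f t i j) < eps.

Definition sup_bound (r c : nat) (f : R -> Mat) (K : R) : Prop :=
  forall t, 0 <= t <= 1 -> mnorm r c (f t) <= K.

Definition t0 (p m : nat) : R := (INR m - 1) / 2 ^ p.
Definition t1 (p m : nat) : R := (2 * INR m - 1) / 2 ^ (S p).
Definition t2 (p m : nat) : R := INR m / 2 ^ p.

Definition valid_index (p : Z) (m : nat) : Prop :=
  (p = (-1)%Z /\ m = O) \/ ((0 <= p)%Z /\ (m <= 2 ^ Z.to_nat p)%nat).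

Definition coef (f : R -> Mat) (p : Z) (m : nat) : Mat :=
  if Z.eqb p (-1) then f 0
  else if Z.ltb p 0 then mzero
  else match m with
       | O => if Z.eqb p 0 then msub (f 1) (f 0) else mzero
       | S _ =>
         let q := Z.to_nat p in
         fun i j => 2 * f (t1 q m) i j - f (t0 q m) i j - f (t2 q m) i j
       end.

(* Rescaled Schauder functions phi_{pm}(t) = int_0^t chi_{pm}, p >= 0, written
   out explicitly: phi_{00}(t) = t, phi_{p0} = 0 for p >= 1, and for m >= 1
   the hat function supported on [t0,t2] with slope 2^p on [t0,t1] and
   -2^p on [t1,t2] (for t in [0,1]). *)
Definition phi (p m : nat) (t : R) : R :=
  match m with
  | O => match p with O => t | S _ => 0 end
  | S _ =>
    if Rle_dec t (t0 p m) then 0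
    else if Rle_dec t (t1 p m) then 2 ^ p * (t - t0 p m)
    else if Rle_dec t (t2 p m) then 2 ^ p * (t2 p m - t)
    else 0
  end.

(* Delta_{-1} f = f_{-10} phi_{-10} = f(0) *)
Definition Delta_m1 (f : R -> Mat) (t : R) : Mat := coef f (-1)%Z O.

Definition Delta (p : nat) (f : R -> Mat) (t : R) : Mat :=
  msum (S (2 ^ p)) (fun m => mscal (phi p m t) (coef f (Z.of_nat p) m)).

(* S_{p-1} f = sum_{q=-1}^{p-1} Delta_q f, for p >= 0 *)
Definition S_below (p : nat) (f : R -> Mat) (t : R) : Mat :=
  madd (Delta_m1 f t) (msum p (fun q => Delta q f t)).

(* Limit of a real sequence (chosen by classical choice; the sequences below
   converge, so this is the usual limit). *)
Definition lim_seq (u : nat -> R) : R :=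
  epsilon (inhabits 0) (fun l => Un_cv u l).

Definition paraprod (k : nat) (v w : R -> Mat) (t : R) : Mat :=
  fun i j => lim_seq (fun N =>
    rsum (S N) (fun p => mmul k (S_below p v t) (Delta p w t) i j)).

Definition holder_bound (r c : nat) (alpha : R) (f : R -> Mat) (K : R) : Prop :=
  forall p m, valid_index p m ->
    Rpower 2 (IZR p * alpha) * mnorm r c (coef f p m) <= K.

(* The Schauder coefficients of [g = pi_<(u, pi_<(v, w)) - pi_<(uv, w)] are second
   differences over dyadic intervals, and by the Hoelder hypotheses the second differences
   of [v], [w] decay like [2^(-p alpha)], [2^(-p beta)]; since [alpha, beta < 1], so do the
   increments of [v] and [w] over dyadic intervals.

   At the three nodes of an interval of level [p] a paraproduct [pi_<(a, b)] only involves
   the blocks [q <= p], and every partial sum [S_q a] with [q <= p] is affine there.  The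
   Leibniz rule for second differences then gives
     sdiff pi_<(a, b) = S_p a(t1) sdiff b - 1/2 sum_(q<p) incr (S_q a) incr (Delta_q b).
   For [g] the leading terms cancel up to [S_p u S_p v - S_p (uv) = -1/4 incr u incr v]
   at the midpoint, and the correction sums combine, by the same formula applied on the
   coarser interval of level [q], into products of increments of [u] and [v] with
   [sdiff w] and with the correction term of [pi_<(v, w)].  On an interval of level [p]
   the increments of level-[q] objects carry a factor [2^(q-p)], so every correction is a
   sum [sum_(q<p) 4^(q-p) 2^(-q(alpha+beta))], which is [O(2^(-p(alpha+beta)))] because
   [alpha + beta < 2]. *)

From Pilot Require Import Defs.
From Stdlib Require Import Reals ZArith Lra Lia Psatz FunctionalExtensionality ClassicalEpsilon.
(* [Reals] also exports a [Delta]; re-importing [Defs] makes [Delta] the Schauder block. *)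
Import Defs.
Open Scope R_scope.

(** * Finite sums and the operator norm *)

Lemma rsum_ext n f g : (forall i, (i < n)%nat -> f i = g i) -> rsum n f = rsum n g.
Proof.
  induction n as [|n IH]; intros H; simpl; [reflexivity|].
  rewrite IH, H by (lia || (intros; apply H; lia)). reflexivity.
Qed.

Lemma rsum_0 n : rsum n (fun _ => 0) = 0.
Proof. induction n; simpl; lra. Qed.

Lemma rsum_plus n f g : rsum n (fun i => f i + g i) = rsum n f + rsum n g.
Proof. induction n; simpl; lra. Qed.

Lemma rsum_scal n c f : rsum n (fun i => c * f i) = c * rsum n f.
Proof. induction n; simpl; lra. Qed.

Lemma rsum_le n f g : (forall i, (i < n)%nat -> f i <= g i) -> rsum n f <= rsum n g.
Proof.
  induction n as [|n IH]; intros H; simpl; [lra|].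
  assert (f n <= g n) by (apply H; lia).
  assert (rsum n f <= rsum n g) by (apply IH; intros; apply H; lia). lra.
Qed.

Lemma rsum_abs n f : Rabs (rsum n f) <= rsum n (fun i => Rabs (f i)).
Proof.
  induction n; simpl; [rewrite Rabs_R0; lra|].
  eapply Rle_trans; [apply Rabs_triang | lra].
Qed.

Lemma rsum_single n f k : (k < n)%nat ->
  (forall i, (i < n)%nat -> i <> k -> f i = 0) -> rsum n f = f k.
Proof.
  induction n as [|n IH]; intros Hk H; simpl; [lia|].
  destruct (Nat.eq_dec k n) as [->|Hne].
  - rewrite (rsum_ext n f (fun _ => 0)), rsum_0 by (intros; apply H; lia). lra.
  - rewrite IH, (H n) by (lia || (intros; apply H; lia)). lra.
Qed.

Lemma rsum_swap n k f :
  rsum n (fun i => rsum k (fun j => f i j)) = rsum k (fun j => rsum n (fun i => f i j)).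
Proof.
  induction n as [|n IH]; simpl.
  - symmetry; apply rsum_0.
  - rewrite IH, <- rsum_plus. reflexivity.
Qed.

Lemma rsum_tail N m F : (forall q, (N <= q)%nat -> F q = 0) -> rsum (N + m) F = rsum N F.
Proof.
  intros H; induction m as [|m IH]; [now rewrite Nat.add_0_r|].
  rewrite Nat.add_succ_r; simpl. rewrite IH, H by lia. ring.
Qed.

Lemma rmaxn_nonneg n f : 0 <= rmaxn n f.
Proof. induction n; simpl; [lra | eapply Rle_trans; [eassumption | apply Rmax_l]]. Qed.

Lemma rmaxn_ge n f i : (i < n)%nat -> f i <= rmaxn n f.
Proof.
  induction n as [|n IH]; intros H; simpl; [lia|].
  destruct (Nat.eq_dec i n) as [->|]; [apply Rmax_r|].
  eapply Rle_trans; [apply IH; lia | apply Rmax_l].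
Qed.

Lemma rmaxn_lub n f K : 0 <= K -> (forall i, (i < n)%nat -> f i <= K) -> rmaxn n f <= K.
Proof.
  induction n; intros HK H; simpl; [assumption|].
  apply Rmax_lub; [apply IHn | apply H]; auto.
Qed.

Lemma mnorm_nonneg r c A : 0 <= mnorm r c A.
Proof. apply rmaxn_nonneg. Qed.

Lemma mnorm_row r c A i : (i < r)%nat -> rsum c (fun j => Rabs (A i j)) <= mnorm r c A.
Proof. apply (rmaxn_ge r (fun i => rsum c (fun j => Rabs (A i j)))). Qed.

Lemma mnorm_lub r c A K : 0 <= K ->
  (forall i, (i < r)%nat -> rsum c (fun j => Rabs (A i j)) <= K) -> mnorm r c A <= K.
Proof. apply rmaxn_lub. Qed.

Lemma mnorm_zero r c : mnorm r c mzero = 0.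
Proof.
  apply Rle_antisym; [|apply mnorm_nonneg].
  apply mnorm_lub; [lra|]. intros. unfold mzero. rewrite Rabs_R0, rsum_0. lra.
Qed.

Lemma mnorm_add r c A B : mnorm r c (madd A B) <= mnorm r c A + mnorm r c B.
Proof.
  pose proof (mnorm_nonneg r c A); pose proof (mnorm_nonneg r c B).
  apply mnorm_lub; [lra|]. intros i Hi.
  apply Rle_trans with (rsum c (fun j => Rabs (A i j) + Rabs (B i j))).
  - apply rsum_le. intros. apply Rabs_triang.
  - rewrite rsum_plus. pose proof (mnorm_row r c A i Hi); pose proof (mnorm_row r c B i Hi). lra.
Qed.

Lemma mnorm_scal r c a A : mnorm r c (mscal a A) <= Rabs a * mnorm r c A.
Proof.
  pose proof (mnorm_nonneg r c A); pose proof (Rabs_pos a).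
  apply mnorm_lub; [nra|]. intros i Hi. unfold mscal.
  rewrite (rsum_ext _ _ (fun j => Rabs a * Rabs (A i j))) by (intros; apply Rabs_mult).
  rewrite rsum_scal. pose proof (mnorm_row r c A i Hi). nra.
Qed.

Lemma mnorm_sub r c A B : mnorm r c (msub A B) <= mnorm r c A + mnorm r c B.
Proof.
  replace (msub A B) with (madd A (mscal (-1) B)) by (unfold msub, madd, mscal;
    do 2 (apply functional_extensionality; intro); ring).
  eapply Rle_trans; [apply mnorm_add|].
  pose proof (mnorm_scal r c (-1) B). rewrite Rabs_left in H by lra. lra.
Qed.

Lemma mnorm_mul r k c A B : mnorm r c (mmul k A B) <= mnorm r k A * mnorm k c B.
Proof.
  pose proof (mnorm_nonneg r k A); pose proof (mnorm_nonneg k c B).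
  apply mnorm_lub; [nra|]. intros i Hi. unfold mmul.
  apply Rle_trans with (rsum c (fun j => rsum k (fun l => Rabs (A i l) * Rabs (B l j)))).
  { apply rsum_le. intros. eapply Rle_trans; [apply rsum_abs|].
    right; apply rsum_ext; intros; apply Rabs_mult. }
  rewrite rsum_swap.
  apply Rle_trans with (rsum k (fun l => mnorm k c B * Rabs (A i l))).
  - apply rsum_le. intros l Hl. rewrite rsum_scal, Rmult_comm.
    apply Rmult_le_compat_r; [apply Rabs_pos | apply mnorm_row; auto].
  - rewrite rsum_scal. pose proof (mnorm_row r k A i Hi). nra.
Qed.

Lemma mnorm_msum r c N F : mnorm r c (msum N F) <= rsum N (fun q => mnorm r c (F q)).
Proof.
  induction N as [|N IH]; simpl.
  - replace (msum 0 F) with mzero by reflexivity. rewrite mnorm_zero. lra.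
  - change (msum (S N) F) with (madd (msum N F) (F N)).
    eapply Rle_trans; [apply mnorm_add | lra].
Qed.

(** * Matrix identities *)

Ltac mat_ext :=
  apply functional_extensionality; let i := fresh "i" in intros i;
  apply functional_extensionality; let j := fresh "j" in intros j.

Definition second_diff (X0 X1 X2 : Mat) : Mat := fun i j => 2 * X1 i j - X0 i j - X2 i j.

Ltac mat_unfold := unfold second_diff, madd, msub, mscal, mzero, mmul, msum.

Ltac mat_ring k := mat_ext; mat_unfold; induction k; simpl; lra.

Lemma mmul_zero_l k A : mmul k mzero A = mzero.
Proof. mat_ring k. Qed.

Lemma mmul_zero_r k A : mmul k A mzero = mzero.
Proof. mat_ring k. Qed.

Lemma mmul_msub_l k A B C : mmul k (msub A B) C = msub (mmul k A C) (mmul k B C).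
Proof. mat_ring k. Qed.

Lemma mmul_msub_r k A B C : mmul k A (msub B C) = msub (mmul k A B) (mmul k A C).
Proof. mat_ring k. Qed.

Lemma mmul_mscal k s s' X Y : mmul k (mscal s X) (mscal s' Y) = mscal (s * s') (mmul k X Y).
Proof. mat_ring k. Qed.

Lemma msub_mscal s X Y : msub (mscal s X) (mscal s Y) = mscal s (msub X Y).
Proof. mat_ext; mat_unfold; ring. Qed.

Lemma mmul_assoc k1 k2 A B C : mmul k2 (mmul k1 A B) C = mmul k1 A (mmul k2 B C).
Proof.
  mat_ext; mat_unfold.
  rewrite (rsum_ext k2 _ (fun l2 => rsum k1 (fun l1 => A i l1 * B l1 l2 * C l2 j))), rsum_swap.
  - apply rsum_ext. intros. rewrite <- rsum_scal. apply rsum_ext; intros; ring.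
  - intros. rewrite Rmult_comm, <- rsum_scal. apply rsum_ext; intros; ring.
Qed.

Lemma msum_ext N F G : (forall q, (q < N)%nat -> F q = G q) -> msum N F = msum N G.
Proof. intros H; mat_ext; unfold msum. apply rsum_ext; intros; rewrite H; auto. Qed.

Lemma msum_msub N F G : msum N (fun q => msub (F q) (G q)) = msub (msum N F) (msum N G).
Proof. mat_ring N. Qed.

Lemma second_diff_msum N F0 F1 F2 : second_diff (msum N F0) (msum N F1) (msum N F2) =
  msum N (fun q => second_diff (F0 q) (F1 q) (F2 q)).
Proof. mat_ring N. Qed.

(* Leibniz rule for second differences, when the left factor takes at the midpoint the
   mean of its endpoint values. *)
Lemma second_diff_mmul k A0 A2 B0 B1 B2 :
  second_diff (mmul k A0 B0) (mmul k (mscal (/2) (madd A0 A2)) B1) (mmul k A2 B2) =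
  msub (mmul k (mscal (/2) (madd A0 A2)) (second_diff B0 B1 B2))
       (mscal (/2) (mmul k (msub A2 A0) (msub B2 B0))).
Proof. mat_ring k. Qed.

Lemma mean_mmul_sub_mean k U0 U2 V0 V2 :
  msub (mmul k (mscal (/2) (madd U0 U2)) (mscal (/2) (madd V0 V2)))
       (mscal (/2) (madd (mmul k U0 V0) (mmul k U2 V2)))
  = mscal (- / 4) (mmul k (msub U2 U0) (msub V2 V0)).
Proof. mat_ring k. Qed.

Lemma commutator_block_identity n d U0 U2 V0 V2 W E :
  msub (mmul n (msub U2 U0) (msub (mmul d (mscal (/2) (madd V0 V2)) W) E))
       (mmul d (msub (mmul n U2 V2) (mmul n U0 V0)) W)
  = msub (mmul d (mscal (- / 2) (mmul n (madd U2 U0) (msub V2 V0))) W)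
         (mmul n (msub U2 U0) E).
Proof.
  rewrite mmul_msub_r, <- mmul_assoc.
  transitivity (msub (mmul d (msub (mmul n (msub U2 U0) (mscal (/2) (madd V0 V2)))
                                   (msub (mmul n U2 V2) (mmul n U0 V0))) W)
                     (mmul n (msub U2 U0) E)).
  - rewrite !(mmul_msub_l d). mat_ext; unfold msub; ring.
  - f_equal; f_equal. mat_ring n.
Qed.

(** * Dyadic intervals and the Schauder system *)

Lemma pow2_pos p : 0 < 2 ^ p.
Proof. apply pow_lt; lra. Qed.

Lemma t0_S p k : t0 p (S k) = INR k / 2 ^ p.
Proof. unfold t0; rewrite S_INR; f_equal; ring. Qed.

Lemma t1_S p k : t1 p (S k) = (2 * INR k + 1) / (2 * 2 ^ p).
Proof. unfold t1; rewrite S_INR; simpl; f_equal; ring. Qed.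

Lemma t2_S p k : t2 p (S k) = (INR k + 1) / 2 ^ p.
Proof. unfold t2; rewrite S_INR; reflexivity. Qed.

Ltac t_simpl := rewrite ?t0_S, ?t1_S, ?t2_S in *.

Lemma t_len p k : t2 p (S k) - t0 p (S k) = / 2 ^ p.
Proof. t_simpl. pose proof (pow2_pos p). field. lra. Qed.

Lemma t1_mid p k : t1 p (S k) = (t0 p (S k) + t2 p (S k)) / 2.
Proof. t_simpl. pose proof (pow2_pos p). field. lra. Qed.

Lemma t_order p k : t0 p (S k) < t1 p (S k) < t2 p (S k).
Proof.
  pose proof (t_len p k); pose proof (t1_mid p k).
  pose proof (Rinv_0_lt_compat _ (pow2_pos p)). lra.
Qed.

Lemma t_in01 p k : (k < 2 ^ p)%nat ->
  0 <= t0 p (S k) <= 1 /\ 0 <= t1 p (S k) <= 1 /\ 0 <= t2 p (S k) <= 1.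
Proof.
  intros Hk. pose proof (t_order p k). t_simpl. pose proof (pow2_pos p).
  assert (Hk' : INR (S k) <= INR (2 ^ p)) by (apply le_INR; lia).
  rewrite S_INR, pow_INR in Hk'. simpl in Hk'. replace (1 + 1) with 2 in Hk' by ring.
  assert (0 <= INR k / 2 ^ p) by (apply Rmult_le_pos; [apply pos_INR | left; apply Rinv_0_lt_compat; lra]).
  assert ((INR k + 1) / 2 ^ p <= 1) by (apply Rmult_le_reg_r with (2 ^ p); [lra|]; field_simplify; lra).
  lra.
Qed.

Lemma t_grid p k : t0 p (S k) = INR (2 * k) / 2 ^ S p /\
  t1 p (S k) = INR (2 * k + 1) / 2 ^ S p /\ t2 p (S k) = INR (2 * k + 2) / 2 ^ S p.
Proof.
  t_simpl. rewrite ?plus_INR, !mult_INR. simpl INR. simpl pow. pose proof (pow2_pos p).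
  repeat split; field; lra.
Qed.

Lemma grid_refine j p n : INR j / 2 ^ p = INR (j * 2 ^ n) / 2 ^ (p + n).
Proof.
  rewrite mult_INR, pow_INR, pow_add. simpl INR. replace (1 + 1) with 2 by ring.
  pose proof (pow2_pos p); pose proof (pow2_pos n). field. lra.
Qed.

Lemma dyadic_parent p k : (k < 2 ^ S p)%nat -> exists K, (K < 2 ^ p)%nat /\
  ((t0 (S p) (S k) = t0 p (S K) /\ t2 (S p) (S k) = t1 p (S K)) \/
   (t0 (S p) (S k) = t1 p (S K) /\ t2 (S p) (S k) = t2 p (S K))).
Proof.
  intros Hk. simpl in Hk. pose proof (pow2_pos p).
  destruct (Nat.Even_or_Odd k) as [[K ->]|[K ->]]; exists K; (split; [lia|]); t_simpl;
    rewrite ?plus_INR, mult_INR; simpl INR; simpl pow.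
  - left; split; field; lra.
  - right; split; field; lra.
Qed.

Lemma dyadic_ancestor q p k : (q <= p)%nat -> (k < 2 ^ p)%nat ->
  exists K, (K < 2 ^ q)%nat /\ t0 q (S K) <= t0 p (S k) /\ t2 p (S k) <= t2 q (S K).
Proof.
  intros Hqp. replace p with (q + (p - q))%nat by lia. generalize (p - q)%nat as n.
  intros n; revert k; induction n as [|n IH]; intros k Hk.
  - rewrite Nat.add_0_r in *. exists k. split; [assumption | lra].
  - rewrite Nat.add_succ_r in *.
    destruct (dyadic_parent _ _ Hk) as [K1 [HK1 Hc]].
    destruct (IH K1 HK1) as [K [HK [A0 A2]]].
    exists K; split; auto. pose proof (t_order (q + n) K1). lra.
Qed.

Lemma dyadic_ancestor_half q p k : (q < p)%nat -> (k < 2 ^ p)%nat -> exists K, (K < 2 ^ q)%nat /\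
  ((t0 q (S K) <= t0 p (S k) /\ t2 p (S k) <= t1 q (S K)) \/
   (t1 q (S K) <= t0 p (S k) /\ t2 p (S k) <= t2 q (S K))).
Proof.
  intros Hqp Hk. destruct (dyadic_ancestor (S q) p k Hqp Hk) as [K1 [HK1 [A0 A2]]].
  destruct (dyadic_parent _ _ HK1) as [K [HK Hc]]. exists K; split; [auto | lra].
Qed.

Lemma phi_out p k x : x <= t0 p (S k) \/ t2 p (S k) <= x -> phi p (S k) x = 0.
Proof.
  intros H. pose proof (t_order p k). unfold phi.
  destruct (Rle_dec x (t0 p (S k))); [reflexivity|].
  destruct (Rle_dec x (t1 p (S k))); [lra|].
  destruct (Rle_dec x (t2 p (S k))); [|reflexivity].
  replace x with (t2 p (S k)) by lra. ring.
Qed.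

Lemma phi_left p k x : t0 p (S k) <= x <= t1 p (S k) -> phi p (S k) x = 2 ^ p * (x - t0 p (S k)).
Proof.
  intros H. unfold phi.
  destruct (Rle_dec x (t0 p (S k))); [replace x with (t0 p (S k)) by lra; ring|].
  destruct (Rle_dec x (t1 p (S k))); [reflexivity | lra].
Qed.

Lemma phi_right p k x : t1 p (S k) <= x <= t2 p (S k) -> phi p (S k) x = 2 ^ p * (t2 p (S k) - x).
Proof.
  intros H. pose proof (t_order p k). pose proof (t_len p k). unfold phi.
  destruct (Rle_dec x (t0 p (S k))); [lra|].
  destruct (Rle_dec x (t1 p (S k))).
  - replace x with (t1 p (S k)) by lra. rewrite t1_mid.
    pose proof (pow2_pos p). apply Rmult_eq_reg_r with (/ 2 ^ p);
      [field_simplify; [lra..] | apply Rinv_neq_0_compat; lra].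
  - destruct (Rle_dec x (t2 p (S k))); [reflexivity | lra].
Qed.

Lemma phi_grid p k j : phi p (S k) (INR j / 2 ^ p) = 0.
Proof.
  apply phi_out. t_simpl. pose proof (Rinv_0_lt_compat _ (pow2_pos p)).
  destruct (le_lt_dec j k).
  - left. apply Rmult_le_compat_r; [lra | apply le_INR; auto].
  - right. apply Rmult_le_compat_r; [lra|].
    rewrite <- S_INR. apply le_INR; lia.
Qed.

(* Intervals of level [p] are indexed from [0]: the [k]-th one has the nodes [t0 p (S k)],
   [t1 p (S k)] and [t2 p (S k)], so that [coef f p (S k) = sdiff f p k]. *)
Definition sdiff (f : R -> Mat) (p k : nat) : Mat :=
  second_diff (f (t0 p (S k))) (f (t1 p (S k))) (f (t2 p (S k))).

Definition incr (f : R -> Mat) (p k : nat) : Mat := msub (f (t2 p (S k))) (f (t0 p (S k))).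

Lemma coef_S f p k : coef f (Z.of_nat p) (S k) = sdiff f p k.
Proof.
  unfold coef.
  replace (Z.of_nat p =? -1)%Z with false by (symmetry; apply Z.eqb_neq; lia).
  replace (Z.of_nat p <? 0)%Z with false by (symmetry; apply Z.ltb_ge; lia).
  rewrite Nat2Z.id. reflexivity.
Qed.

Lemma Delta_0 f x :
  Delta 0 f x = madd (mscal x (msub (f 1) (f 0))) (mscal (phi 0 1 x) (sdiff f 0 0)).
Proof. mat_ext. unfold Delta, coef, sdiff; mat_unfold; simpl; ring. Qed.

Lemma Delta_local p k f x : (1 <= p)%nat -> (k < 2 ^ p)%nat ->
  t0 p (S k) <= x <= t2 p (S k) -> Delta p f x = mscal (phi p (S k) x) (sdiff f p k).
Proof.
  intros Hp Hk Hx. unfold Delta, msum. mat_ext.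
  rewrite (rsum_single _ _ (S k)); [now rewrite coef_S | lia |].
  intros [|m] Hm Hne; unfold mscal.
  - destruct p; [lia | simpl; ring].
  - rewrite phi_out; [ring|].
    pose proof (Rinv_0_lt_compat _ (pow2_pos p)). t_simpl.
    destruct (le_lt_dec m k).
    + right. apply Rle_trans with (INR k / 2 ^ p); [|lra].
      apply Rmult_le_compat_r; [lra|]. rewrite <- S_INR. apply le_INR; lia.
    + left. apply Rle_trans with ((INR k + 1) / 2 ^ p); [lra|].
      apply Rmult_le_compat_r; [lra|]. rewrite <- S_INR. apply le_INR; lia.
Qed.

Lemma Delta_grid q j f : (1 <= q)%nat -> Delta q f (INR j / 2 ^ q) = mzero.
Proof.
  intros Hq. unfold Delta, msum, mzero. mat_ext.
  rewrite <- (rsum_0 (S (2 ^ q))). apply rsum_ext. intros [|m] _; unfold mscal.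
  - destruct q; [lia | simpl; ring].
  - rewrite phi_grid. ring.
Qed.

(** * Partial sums as interpolants *)

Lemma S_below_0 f x : S_below 0 f x = f 0.
Proof. mat_ext. unfold S_below, Delta_m1, coef; mat_unfold; simpl. ring. Qed.

Lemma S_below_S q f x : S_below (S q) f x = madd (S_below q f x) (Delta q f x).
Proof. mat_ext. unfold S_below; mat_unfold; simpl. ring. Qed.

Lemma Delta_eq q f : Delta q f = fun x => msub (S_below (S q) f x) (S_below q f x).
Proof. apply functional_extensionality; intros x. rewrite S_below_S. mat_ext; mat_unfold; ring. Qed.

Definition interp (f : R -> Mat) (p k : nat) (x : R) : Mat :=
  madd (f (t0 p (S k))) (mscal (2 ^ p * (x - t0 p (S k))) (incr f p k)).

Lemma interp_refine r k f x : (k < 2 ^ S r)%nat -> t0 (S r) (S k) <= x <= t2 (S r) (S k) ->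
  exists K, (K < 2 ^ r)%nat /\ t0 r (S K) <= x <= t2 r (S K) /\
    madd (interp f r K x) (mscal (phi r (S K) x) (sdiff f r K)) = interp f (S r) k x.
Proof.
  intros Hk Hx. destruct (dyadic_parent r k Hk) as [K [HK [[E0 E2]|[E0 E2]]]];
    exists K; pose proof (t_order r K); pose proof (t1_mid r K); pose proof (t_len r K);
    pose proof (pow2_pos r); (split; [assumption | split; [lra|]]);
    unfold interp, incr, sdiff; rewrite E0, E2 in *; simpl pow.
  - rewrite phi_left by lra. mat_ext; mat_unfold. ring.
  - rewrite phi_right by lra. mat_ext; mat_unfold.
    set (F0 := f (t0 r (S K)) _ _); set (F1 := f (t1 r (S K)) _ _); set (F2 := f (t2 r (S K)) _ _).
    replace (t2 r (S K)) with (t0 r (S K) + / 2 ^ r) by lra.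
    replace (t1 r (S K)) with (t0 r (S K) + / 2 ^ r / 2) by lra.
    field. lra.
Qed.

(* [S_below (S r)] is the paper's [S_r]. *)
Lemma S_below_S_local r k f x : (k < 2 ^ r)%nat -> t0 r (S k) <= x <= t2 r (S k) ->
  S_below (S r) f x = madd (interp f r k x) (mscal (phi r (S k) x) (sdiff f r k)).
Proof.
  revert k x; induction r as [|r IH]; intros k x Hk Hx.
  - replace k with 0%nat in * by (simpl in Hk; lia).
    rewrite S_below_S, S_below_0, Delta_0.
    unfold interp, incr. unfold t0, t2 at 1; simpl. mat_ext; mat_unfold.
    replace ((1 - 1) / 1) with 0 by field. replace (1 / 1) with 1 by field. ring.
  - destruct (interp_refine r k f x Hk Hx) as [K [HK [HxK Href]]].
    rewrite S_below_S, (IH K x HK HxK), Href, (Delta_local (S r) k f x) by (lia || lra).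
    reflexivity.
Qed.

Lemma S_below_interp r k f x : (1 <= r)%nat -> (k < 2 ^ r)%nat ->
  t0 r (S k) <= x <= t2 r (S k) -> S_below r f x = interp f r k x.
Proof.
  intros Hr Hk Hx. destruct r as [|r]; [lia|].
  destruct (interp_refine r k f x Hk Hx) as [K [HK [HxK Href]]].
  rewrite (S_below_S_local r K f x HK HxK). exact Href.
Qed.

Lemma S_below_S_nodes p k f : (k < 2 ^ p)%nat ->
  S_below (S p) f (t0 p (S k)) = f (t0 p (S k)) /\
  S_below (S p) f (t1 p (S k)) = f (t1 p (S k)) /\
  S_below (S p) f (t2 p (S k)) = f (t2 p (S k)).
Proof.
  intros Hk. pose proof (t_order p k); pose proof (t1_mid p k); pose proof (t_len p k) as Hlen.
  pose proof (pow2_pos p).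
  assert (Hhalf : 2 ^ p * (t1 p (S k) - t0 p (S k)) = / 2).
  { replace (t1 p (S k) - t0 p (S k)) with (/ 2 ^ p / 2) by lra. field. lra. }
  assert (Hone : 2 ^ p * (t2 p (S k) - t0 p (S k)) = 1) by (rewrite Hlen; field; lra).
  rewrite !(S_below_S_local p k f) by (assumption || lra). unfold interp, incr, sdiff.
  rewrite phi_out, (phi_left p k (t1 p (S k))), phi_out, Hhalf, Hone by lra.
  repeat split; mat_ext; mat_unfold; field.
Qed.

Definition midpoint_affine (f : R -> Mat) (p k : nat) : Prop :=
  f (t1 p (S k)) = mscal (/2) (madd (f (t0 p (S k))) (f (t2 p (S k)))).

Lemma sdiff_midpoint_affine f p k : midpoint_affine f p k -> sdiff f p k = mzero.
Proof. unfold midpoint_affine, sdiff. intros ->. mat_ext; mat_unfold. field. Qed.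

Lemma S_below_midpoint_affine q p k f : (q <= p)%nat -> (k < 2 ^ p)%nat ->
  midpoint_affine (S_below q f) p k.
Proof.
  unfold midpoint_affine. intros Hqp Hk. destruct q as [|q].
  - rewrite !S_below_0. mat_ext; mat_unfold. field.
  - destruct (dyadic_ancestor (S q) p k Hqp Hk) as [K [HK [A0 A2]]].
    pose proof (t_order p k); pose proof (t1_mid p k) as Hmid.
    rewrite !(S_below_interp (S q) K f) by (lia || lra).
    unfold interp. rewrite Hmid. mat_ext; mat_unfold. field.
Qed.

Lemma sdiff_msub (F G : R -> Mat) p k :
  sdiff (fun t => msub (F t) (G t)) p k = msub (sdiff F p k) (sdiff G p k).
Proof. unfold sdiff. mat_ext; mat_unfold. ring. Qed.

Lemma incr_msub (F G : R -> Mat) p k :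
  incr (fun t => msub (F t) (G t)) p k = msub (incr F p k) (incr G p k).
Proof. unfold incr. mat_ext; mat_unfold. ring. Qed.

Lemma sdiff_Delta_coarse q p k f : (q < p)%nat -> (k < 2 ^ p)%nat -> sdiff (Delta q f) p k = mzero.
Proof.
  intros Hqp Hk. rewrite Delta_eq, sdiff_msub, !sdiff_midpoint_affine
    by (apply S_below_midpoint_affine; lia).
  mat_ext; mat_unfold; ring.
Qed.

Lemma sdiff_Delta_same p k f : (k < 2 ^ p)%nat -> sdiff (Delta p f) p k = sdiff f p k.
Proof.
  intros Hk. rewrite Delta_eq, sdiff_msub, (sdiff_midpoint_affine (S_below p f))
    by (apply S_below_midpoint_affine; lia).
  destruct (S_below_S_nodes p k f Hk) as [E0 [E1 E2]].
  unfold sdiff; rewrite E0, E1, E2. mat_ext; mat_unfold; ring.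
Qed.

Lemma incr_S_below_0 p k f : incr (S_below 0 f) p k = mzero.
Proof. unfold incr. rewrite !S_below_0. mat_ext; mat_unfold; ring. Qed.

Lemma S_below_endpoints p k f : (1 <= p)%nat -> (k < 2 ^ p)%nat ->
  S_below p f (t0 p (S k)) = f (t0 p (S k)) /\ S_below p f (t2 p (S k)) = f (t2 p (S k)).
Proof.
  intros Hp Hk. pose proof (t_order p k).
  rewrite !(S_below_interp p k f) by (assumption || lra). unfold interp, incr.
  replace (2 ^ p * (t2 p (S k) - t0 p (S k))) with 1
    by (rewrite t_len; field; apply pow_nonzero; lra).
  split; mat_ext; mat_unfold; ring.
Qed.

Lemma S_below_t1 p k f : (1 <= p)%nat -> (k < 2 ^ p)%nat ->
  S_below p f (t1 p (S k)) = mscal (/2) (madd (f (t0 p (S k))) (f (t2 p (S k)))).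
Proof.
  intros Hp Hk. destruct (S_below_endpoints p k f Hp Hk) as [E0 E2].
  rewrite (S_below_midpoint_affine p p k f (le_n p) Hk), E0, E2. reflexivity.
Qed.

Lemma incr_Delta_same p k f : (1 <= p)%nat -> (k < 2 ^ p)%nat -> incr (Delta p f) p k = mzero.
Proof.
  intros Hp Hk. rewrite Delta_eq, incr_msub. unfold incr.
  destruct (S_below_S_nodes p k f Hk) as [E0 [_ E2]].
  destruct (S_below_endpoints p k f Hp Hk) as [F0 F2].
  rewrite E0, E2, F0, F2. mat_ext; mat_unfold; ring.
Qed.

(** * Paraproducts at dyadic nodes *)

Lemma lim_seq_eventually_const (u : nat -> R) c N :
  (forall K, (N <= K)%nat -> u K = c) -> lim_seq u = c.
Proof.
  intros H. assert (Hc : Un_cv u c).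
  { intros eps Heps. exists N. intros K HK. rewrite H by lia.
    unfold R_dist. rewrite Rminus_diag, Rabs_R0. lra. }
  apply (UL_sequence u); [|exact Hc].
  exact (epsilon_spec (inhabits 0) (fun l => Un_cv u l) (ex_intro _ c Hc)).
Qed.

Lemma paraprod_finite k a b x N : (forall q, (N <= q)%nat -> Delta q b x = mzero) ->
  paraprod k a b x = msum N (fun q => mmul k (S_below q a x) (Delta q b x)).
Proof.
  intros H. unfold paraprod. mat_ext. unfold msum.
  apply lim_seq_eventually_const with N. intros K HK.
  replace (S K) with (N + (S K - N))%nat by lia.
  apply rsum_tail. intros q Hq. rewrite H, mmul_zero_r by assumption. reflexivity.
Qed.

(* [Delta q] vanishes on the dyadic grid of level [q], which contains the nodes of level [p]
   when [p < q]. *)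
Lemma sdiff_paraprod_finite k a b p K : sdiff (paraprod k a b) p K =
  sdiff (fun x => msum (S p) (fun q => mmul k (S_below q a x) (Delta q b x))) p K.
Proof.
  assert (Hgrid : forall j, paraprod k a b (INR j / 2 ^ S p) =
    msum (S p) (fun q => mmul k (S_below q a (INR j / 2 ^ S p)) (Delta q b (INR j / 2 ^ S p)))).
  { intros j. apply paraprod_finite. intros q Hq.
    rewrite (grid_refine j (S p) (q - S p)). replace (S p + (q - S p))%nat with q by lia.
    apply Delta_grid. lia. }
  destruct (t_grid p K) as [E0 [E1 E2]].
  unfold sdiff. rewrite E0, E1, E2, !Hgrid. reflexivity.
Qed.

Lemma sdiff_msum N F p K :
  sdiff (fun x => msum N (fun q => F q x)) p K = msum N (fun q => sdiff (F q) p K).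
Proof. apply second_diff_msum. Qed.

Lemma sdiff_mmul_midpoint_affine k A B p K : midpoint_affine A p K ->
  sdiff (fun x => mmul k (A x) (B x)) p K =
  msub (mmul k (A (t1 p (S K))) (sdiff B p K)) (mscal (/2) (mmul k (incr A p K) (incr B p K))).
Proof. unfold midpoint_affine, sdiff, incr. intros ->. apply second_diff_mmul. Qed.

Definition para_corr (k : nat) (a b : R -> Mat) (p K : nat) : Mat :=
  mscal (/2) (msum p (fun q => mmul k (incr (S_below q a) p K) (incr (Delta q b) p K))).

Lemma sdiff_paraprod k a b p K : (K < 2 ^ p)%nat ->
  sdiff (paraprod k a b) p K =
  msub (mmul k (S_below p a (t1 p (S K))) (sdiff b p K)) (para_corr k a b p K).
Proof.
  intros HK. unfold para_corr.
  rewrite sdiff_paraprod_finite, sdiff_msum.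
  rewrite (msum_ext _ _ (fun q => msub (mmul k (S_below q a (t1 p (S K))) (sdiff (Delta q b) p K))
             (mscal (/2) (mmul k (incr (S_below q a) p K) (incr (Delta q b) p K)))))
    by (intros; apply sdiff_mmul_midpoint_affine, S_below_midpoint_affine; lia).
  change (msum (S p) ?F) with (madd (msum p F) (F p)).
  rewrite (msum_ext p _ (fun q => msub mzero
             (mscal (/2) (mmul k (incr (S_below q a) p K) (incr (Delta q b) p K)))))
    by (intros; rewrite sdiff_Delta_coarse, mmul_zero_r by lia; reflexivity).
  assert (Hlast : mmul k (incr (S_below p a) p K) (incr (Delta p b) p K) = mzero).
  { destruct p as [|p].
    - rewrite incr_S_below_0. apply mmul_zero_l.
    - rewrite incr_Delta_same by lia. apply mmul_zero_r. }
  rewrite sdiff_Delta_same, Hlast, msum_msub by assumption.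
  mat_ext; mat_unfold. rewrite rsum_0, rsum_scal. ring.
Qed.

Lemma Delta_at_0 q f : Delta q f 0 = mzero.
Proof.
  destruct q as [|q].
  - rewrite Delta_0. pose proof (phi_grid 0 0 0) as Hphi.
    replace (INR 0 / 2 ^ 0) with 0 in Hphi by (simpl; field). rewrite Hphi. mat_ext; mat_unfold; ring.
  - replace 0 with (INR 0 / 2 ^ S q) by (simpl; field; apply pow_nonzero; lra).
    apply Delta_grid; lia.
Qed.

Lemma Delta_at_1 q f : (1 <= q)%nat -> Delta q f 1 = mzero.
Proof.
  intros Hq. replace 1 with (INR (2 ^ q) / 2 ^ q); [apply Delta_grid; assumption|].
  rewrite pow_INR. simpl INR. replace (1 + 1) with 2 by ring. field. apply pow_nonzero; lra.
Qed.

Lemma paraprod_at_0 k a b : paraprod k a b 0 = mzero.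
Proof. rewrite (paraprod_finite k a b 0 0) by (intros; apply Delta_at_0). reflexivity. Qed.

Lemma paraprod_at_1 k a b : paraprod k a b 1 = mmul k (a 0) (msub (b 1) (b 0)).
Proof.
  rewrite (paraprod_finite k a b 1 1) by (intros; apply Delta_at_1; assumption).
  change (msum 1 ?F) with (madd mzero (F 0%nat)); cbv beta.
  rewrite S_below_0, Delta_0.
  pose proof (phi_grid 0 0 1) as Hphi. replace (INR 1 / 2 ^ 0) with 1 in Hphi by (simpl; field).
  rewrite Hphi. mat_ext; mat_unfold. induction k; simpl; lra.
Qed.

(** * Hoelder bounds *)

Definition dyadic_bound (r c : nat) (A : R) (f : R -> Mat) (K : R) : Prop :=
  mnorm r c (msub (f 1) (f 0)) <= K /\
  forall q k, (k < 2 ^ q)%nat -> A ^ q * mnorm r c (sdiff f q k) <= K.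

Lemma Rpower_2_nat a q : Rpower 2 (IZR (Z.of_nat q) * a) = Rpower 2 a ^ q.
Proof.
  rewrite <- INR_IZR_INZ, Rmult_comm, <- Rpower_mult, Rpower_pow; [reflexivity|].
  apply exp_pos.
Qed.

Lemma holder_dyadic_bound r c a f K :
  holder_bound r c a f K -> dyadic_bound r c (Rpower 2 a) f K.
Proof.
  intros H. split.
  - specialize (H 0%Z 0%nat ltac:(right; simpl; lia)).
    rewrite Rmult_0_l, Rpower_O, Rmult_1_l in H by lra. exact H.
  - intros q k Hk. rewrite <- Rpower_2_nat, <- coef_S.
    apply H. right. rewrite Nat2Z.id. lia.
Qed.

Lemma dyadic_bound_nonneg r c A f K : dyadic_bound r c A f K -> 0 <= K.
Proof. intros [H _]. pose proof (mnorm_nonneg r c (msub (f 1) (f 0))). lra. Qed.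

Lemma dyadic_holder_bound r c a f K : 0 <= a -> mnorm r c (f 0) <= K ->
  dyadic_bound r c (Rpower 2 a) f K -> holder_bound r c a f K.
Proof.
  intros Ha Hf0 Hf. pose proof (dyadic_bound_nonneg _ _ _ _ _ Hf) as HK.
  destruct Hf as [H01 Hsd].
  intros p mm [[-> ->]|[Hp Hm]].
  - unfold coef; simpl.
    assert (Rpower 2 (-1 * a) <= 1).
    { rewrite <- (Rpower_O 2) by lra. apply Rle_Rpower; lra. }
    pose proof (mnorm_nonneg r c (f 0)). nra.
  - destruct (Z_of_nat_complete p Hp) as [q ->]. rewrite Nat2Z.id in Hm.
    destruct mm as [|k].
    + destruct q as [|q].
      * unfold coef; simpl. rewrite Rmult_0_l, Rpower_O, Rmult_1_l by lra. exact H01.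
      * unfold coef.
        replace (Z.of_nat (S q) =? -1)%Z with false by (symmetry; apply Z.eqb_neq; lia).
        replace (Z.of_nat (S q) <? 0)%Z with false by (symmetry; apply Z.ltb_ge; lia).
        replace (Z.of_nat (S q) =? 0)%Z with false by (symmetry; apply Z.eqb_neq; lia).
        rewrite mnorm_zero, Rmult_0_r. exact HK.
    + rewrite coef_S, Rpower_2_nat. apply Hsd. lia.
Qed.

Lemma Rpower_2_bounds a : 0 < a < 1 -> 1 < Rpower 2 a < 2.
Proof.
  intros Ha. split.
  - rewrite <- (Rpower_O 2) by lra. apply Rpower_lt; lra.
  - rewrite <- (Rpower_1 2) at 2 by lra. apply Rpower_lt; lra.
Qed.

Definition incr_const (A : R) : R := 2 / (2 - A).

Lemma incr_const_ge_1 A : 0 <= A < 2 -> 1 <= incr_const A.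
Proof.
  intros HA. unfold incr_const. apply Rmult_le_reg_r with (2 - A); [lra|].
  field_simplify; lra.
Qed.

Lemma incr_child f r c q k : (k < 2 ^ S q)%nat -> exists K, (K < 2 ^ q)%nat /\
  mnorm r c (incr f (S q) k) <= / 2 * (mnorm r c (incr f q K) + mnorm r c (sdiff f q K)).
Proof.
  intros Hk. destruct (dyadic_parent q k Hk) as [K [HK [[E0 E2]|[E0 E2]]]];
    exists K; split; auto; unfold incr, sdiff; rewrite E0, E2.
  - replace (msub (f (t1 q (S K))) (f (t0 q (S K)))) with
      (mscal (/2) (madd (msub (f (t2 q (S K))) (f (t0 q (S K))))
        (second_diff (f (t0 q (S K))) (f (t1 q (S K))) (f (t2 q (S K))))))
      by (mat_ext; mat_unfold; field).
    eapply Rle_trans; [apply mnorm_scal|]. rewrite Rabs_pos_eq by lra.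
    apply Rmult_le_compat_l; [lra | apply mnorm_add].
  - replace (msub (f (t2 q (S K))) (f (t1 q (S K)))) with
      (mscal (/2) (msub (msub (f (t2 q (S K))) (f (t0 q (S K))))
        (second_diff (f (t0 q (S K))) (f (t1 q (S K))) (f (t2 q (S K))))))
      by (mat_ext; mat_unfold; field).
    eapply Rle_trans; [apply mnorm_scal|]. rewrite Rabs_pos_eq by lra.
    apply Rmult_le_compat_l; [lra | apply mnorm_sub].
Qed.

(* Increments over dyadic intervals of a function with decaying second differences
   decay at the same rate, as long as [A < 2]: the recursion [A (C + 1) <= 2 C]
   holds for [C = 2 / (2 - A)] because [(2 - A)^2 >= 0]. *)
Lemma dyadic_bound_incr r c A f K : 0 <= A < 2 -> dyadic_bound r c A f K ->
  forall q k, (k < 2 ^ q)%nat -> A ^ q * mnorm r c (incr f q k) <= incr_const A * K.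
Proof.
  intros HA Hf. pose proof (dyadic_bound_nonneg _ _ _ _ _ Hf) as HK.
  pose proof (incr_const_ge_1 A HA) as HC. destruct Hf as [H00 Hsd].
  induction q as [|q IH]; intros k Hk.
  - replace k with 0%nat by (simpl in Hk; lia).
    unfold incr, t0, t2; simpl. replace ((1 - 1) / 1) with 0 by field.
    replace (1 / 1) with 1 by field. nra.
  - destruct (incr_child f r c q k Hk) as [K' [HK' Hle]].
    specialize (IH K' HK'). specialize (Hsd q K' HK').
    assert (Hrec : A * (incr_const A + 1) <= 2 * incr_const A).
    { unfold incr_const. apply Rmult_le_reg_r with (2 - A); [lra|].
      field_simplify; nra. }
    pose proof (pow_le A q (proj1 HA)).
    apply Rle_trans with (A / 2 * (A ^ q * mnorm r c (incr f q K') + A ^ q * mnorm r c (sdiff f q K'))).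
    + simpl. apply Rle_trans with (A * A ^ q * (/ 2 * (mnorm r c (incr f q K') + mnorm r c (sdiff f q K')))).
      * apply Rmult_le_compat_l; [nra | exact Hle].
      * right; field.
    + apply Rle_trans with (A / 2 * (incr_const A * K + K)); [|nra].
      apply Rmult_le_compat_l; lra.
Qed.

(* On an interval of a finer level [p], a coarser [S_q f] is affine and [Delta_q f] is a
   multiple of one hat function, whose slopes are [+-2^q]. *)
Lemma incr_coarse_blocks q p k : (1 <= q)%nat -> (q < p)%nat -> (k < 2 ^ p)%nat ->
  exists K c, (K < 2 ^ q)%nat /\ Rabs c = 2 ^ q / 2 ^ p /\
  (forall f, incr (S_below q f) p k = mscal (2 ^ q / 2 ^ p) (incr f q K)) /\
  (forall f, incr (Delta q f) p k = mscal c (sdiff f q K)).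
Proof.
  intros Hq Hqp Hk. destruct (dyadic_ancestor_half q p k Hqp Hk) as [K [HK Hh]].
  pose proof (t_order p k); pose proof (t_order q K); pose proof (t_len p k) as Hlen.
  pose proof (pow2_pos p); pose proof (pow2_pos q).
  assert (Hs : 2 ^ q / 2 ^ p = 2 ^ q * (t2 p (S k) - t0 p (S k))) by (rewrite Hlen; field; lra).
  assert (Hs0 : 0 <= 2 ^ q / 2 ^ p) by (rewrite Hs; nra).
  assert (HS : forall f, incr (S_below q f) p k = mscal (2 ^ q / 2 ^ p) (incr f q K)).
  { intros f. unfold incr. rewrite !(S_below_interp q K f) by (assumption || lra).
    unfold interp, incr. rewrite Hs. mat_ext; mat_unfold. ring. }
  destruct Hh as [Hh|Hh]; [exists K, (2 ^ q / 2 ^ p) | exists K, (- (2 ^ q / 2 ^ p))];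
    rewrite ?Rabs_Ropp, Rabs_pos_eq by exact Hs0; (repeat split; [assumption | exact HS |]);
    intros f; unfold incr; rewrite !(Delta_local q K f) by (assumption || lra).
  - rewrite !phi_left by lra. rewrite Hs. mat_ext; mat_unfold. ring.
  - rewrite !phi_right by lra. rewrite Hs. mat_ext; mat_unfold. ring.
Qed.

Lemma incr_mmul_coarse q p k : (1 <= q)%nat -> (q < p)%nat -> (k < 2 ^ p)%nat ->
  exists K c, (K < 2 ^ q)%nat /\ Rabs c = (2 ^ q / 2 ^ p) ^ 2 /\
  forall n a b, mmul n (incr (S_below q a) p k) (incr (Delta q b) p k) =
                mscal c (mmul n (incr a q K) (sdiff b q K)).
Proof.
  intros Hq Hqp Hk. destruct (incr_coarse_blocks q p k Hq Hqp Hk) as [K [c [HK [Hc [HS HD]]]]].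
  exists K, (2 ^ q / 2 ^ p * c). split; [assumption | split].
  - rewrite Rabs_mult, Hc, Rabs_pos_eq; [ring|].
    apply Rmult_le_pos; [apply pow_le; lra | left; apply Rinv_0_lt_compat, pow2_pos].
  - intros n a b. rewrite HS, HD. apply mmul_mscal.
Qed.

Lemma geometric_sum_bound r c G X p (F : nat -> Mat) : 1 < G -> 0 <= X ->
  (forall q, (q < p)%nat -> mnorm r c (F q) <= X * G ^ q) ->
  mnorm r c (msum p F) <= X * G ^ p / (G - 1).
Proof.
  intros HG HX HF. eapply Rle_trans; [apply mnorm_msum|].
  induction p as [|p IH]; simpl.
  - apply Rmult_le_pos; [nra | left; apply Rinv_0_lt_compat; lra].
  - assert (IH' : rsum p (fun q => mnorm r c (F q)) <= X * G ^ p / (G - 1))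
      by (apply IH; intros; apply HF; lia).
    specialize (HF p (Nat.lt_succ_diag_r p)).
    replace (X * (G * G ^ p) / (G - 1)) with (X * G ^ p / (G - 1) + X * G ^ p) by (field; lra).
    lra.
Qed.

(* The weights [(2^q / 2^p)^2] come from the product of two increments over an interval
   of level [p] of functions living at the coarser level [q]; summing them against the
   decay [L^-q] stays of order [L^-p] because [L < 4]. *)
Lemma dyadic_sum_bound r c L Y p (F : nat -> Mat) : 0 < L < 4 -> 0 <= Y ->
  (forall q, (q < p)%nat -> L ^ q * mnorm r c (F q) <= Y * (2 ^ q / 2 ^ p) ^ 2) ->
  L ^ p * mnorm r c (msum p F) <= Y / (4 / L - 1).
Proof.
  intros HL HY HF. set (G := 4 / L).
  assert (HG : 1 < G) by (unfold G; apply Rmult_lt_reg_r with L; [lra|]; field_simplify; lra).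
  assert (Hpow : forall q, L ^ q * G ^ q = 2 ^ q * 2 ^ q).
  { intros q. rewrite <- !Rpow_mult_distr. f_equal. unfold G. field. lra. }
  assert (HLq : forall q, 0 < L ^ q) by (intros; apply pow_lt; lra).
  pose proof (pow2_pos p) as H2p. assert (H4 : 0 < 2 ^ p * 2 ^ p) by nra.
  assert (Hsum : mnorm r c (msum p F) <= Y / (2 ^ p * 2 ^ p) * G ^ p / (G - 1)).
  { apply geometric_sum_bound; [assumption | apply Rmult_le_pos; [lra | left; apply Rinv_0_lt_compat; lra] |].
    intros q Hq. specialize (HF q Hq). specialize (HLq q).
    apply Rmult_le_reg_l with (L ^ q); [assumption|].
    replace (L ^ q * (Y / (2 ^ p * 2 ^ p) * G ^ q)) with (Y * (2 ^ q / 2 ^ p) ^ 2)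
      by (replace (G ^ q) with (2 ^ q * 2 ^ q / L ^ q) by (rewrite <- Hpow; field; lra);
          field; repeat split; lra).
    exact HF. }
  apply Rle_trans with (L ^ p * (Y / (2 ^ p * 2 ^ p) * G ^ p / (G - 1))).
  - apply Rmult_le_compat_l; [left; apply HLq | exact Hsum].
  - right. replace (L ^ p * (Y / (2 ^ p * 2 ^ p) * G ^ p / (G - 1))) with
      (L ^ p * G ^ p * Y / (2 ^ p * 2 ^ p) / (G - 1)) by (field; lra).
    rewrite Hpow. field. lra.
Qed.

(** * Estimates for the commutator *)

Lemma mnorm_mmul_scaled r k c L M X Y a b : 0 <= L -> 0 <= M ->
  L * mnorm r k X <= a -> M * mnorm k c Y <= b -> L * M * mnorm r c (mmul k X Y) <= a * b.
Proof.
  intros HL HM HX HY. pose proof (mnorm_mul r k c X Y).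
  pose proof (mnorm_nonneg r k X); pose proof (mnorm_nonneg k c Y).
  apply Rle_trans with ((L * mnorm r k X) * (M * mnorm k c Y)).
  - replace ((L * mnorm r k X) * (M * mnorm k c Y)) with (L * M * (mnorm r k X * mnorm k c Y))
      by ring.
    apply Rmult_le_compat_l; [nra | assumption].
  - apply Rmult_le_compat; nra.
Qed.

Lemma mnorm_mmul_scaled_r r k c M X Y a b : 0 <= M ->
  mnorm r k X <= a -> M * mnorm k c Y <= b -> M * mnorm r c (mmul k X Y) <= a * b.
Proof.
  intros HM HX HY.
  replace (M * mnorm r c (mmul k X Y)) with (1 * M * mnorm r c (mmul k X Y)) by ring.
  apply mnorm_mmul_scaled; lra.
Qed.

Lemma mnorm_mscal_scaled r c L s X a : 0 <= L -> L * mnorm r c X <= a ->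
  L * mnorm r c (mscal s X) <= Rabs s * a.
Proof.
  intros HL HX. pose proof (mnorm_scal r c s X). pose proof (Rabs_pos s).
  apply Rle_trans with (Rabs s * (L * mnorm r c X)); [nra|].
  apply Rmult_le_compat_l; assumption.
Qed.

Lemma sup_bound_nonneg r c f K : sup_bound r c f K -> 0 <= K.
Proof. intros Hf. pose proof (mnorm_nonneg r c (f 0)). pose proof (Hf 0 ltac:(lra)). lra. Qed.

Lemma sup_bound_incr r c f K q k : sup_bound r c f K -> (k < 2 ^ q)%nat ->
  mnorm r c (incr f q k) <= 2 * K.
Proof.
  intros Hf Hk. destruct (t_in01 q k Hk) as [Ht0 [_ Ht2]].
  eapply Rle_trans; [apply mnorm_sub|]. pose proof (Hf _ Ht0); pose proof (Hf _ Ht2). lra.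
Qed.

Lemma sup_bound_S_below_t1 r c f K p k : sup_bound r c f K -> (k < 2 ^ p)%nat ->
  mnorm r c (S_below p f (t1 p (S k))) <= K.
Proof.
  intros Hf Hk. destruct p as [|p].
  - rewrite S_below_0. apply Hf. lra.
  - rewrite S_below_t1 by (lia || assumption). destruct (t_in01 (S p) k Hk) as [Ht0 [_ Ht2]].
    eapply Rle_trans; [apply mnorm_scal|]. rewrite Rabs_pos_eq by lra.
    pose proof (mnorm_add r c (f (t0 (S p) (S k))) (f (t2 (S p) (S k)))).
    pose proof (Hf _ Ht0); pose proof (Hf _ Ht2). lra.
Qed.

Definition corr_const (A B : R) : R := incr_const A / 2 / (4 / (A * B) - 1).

Section Estimates.

Variables A B : R.
Hypothesis HA : 0 < A < 2.
Hypothesis HB : 0 < B.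
Hypothesis HAB : A * B < 4.

Lemma incr_const_pos : 0 < incr_const A.
Proof. pose proof (incr_const_ge_1 A ltac:(lra)). lra. Qed.

Lemma four_div_gt_1 : 1 < 4 / (A * B).
Proof. apply Rmult_lt_reg_r with (A * B); [nra|]. field_simplify; nra. Qed.

Lemma corr_const_pos : 0 < corr_const A B.
Proof.
  pose proof incr_const_pos; pose proof four_div_gt_1. unfold corr_const.
  apply Rdiv_lt_0_compat; lra.
Qed.

Lemma AB_pow_nonneg q : 0 <= (A * B) ^ q.
Proof. apply pow_le; nra. Qed.

Lemma para_corr_bound n d v w Kv Kw p k :
  dyadic_bound n d A v Kv -> dyadic_bound d 1 B w Kw -> (k < 2 ^ p)%nat ->
  (A * B) ^ p * mnorm n 1 (para_corr d v w p k) <= corr_const A B * Kv * Kw.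
Proof.
  intros Hv Hw Hk. pose proof (dyadic_bound_nonneg _ _ _ _ _ Hv).
  pose proof (dyadic_bound_nonneg _ _ _ _ _ Hw). pose proof incr_const_pos.
  unfold para_corr. replace (corr_const A B * Kv * Kw) with
    (Rabs (/2) * (incr_const A * Kv * Kw / (4 / (A * B) - 1)))
    by (rewrite Rabs_pos_eq by lra; unfold corr_const; pose proof four_div_gt_1;
        field; lra).
  apply mnorm_mscal_scaled; [apply AB_pow_nonneg|].
  apply dyadic_sum_bound; [nra | apply Rmult_le_pos; nra |].
  intros q Hq. destruct q as [|q].
  - rewrite incr_S_below_0, mmul_zero_l, mnorm_zero, Rmult_0_r.
    apply Rmult_le_pos; [apply Rmult_le_pos; [apply Rmult_le_pos|]; lra | apply pow2_ge_0].
  - destruct (incr_mmul_coarse (S q) p k ltac:(lia) Hq Hk) as [K [c [HK [Hc Hprod]]]].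
    rewrite Hprod, Rpow_mult_distr.
    replace (incr_const A * Kv * Kw * (2 ^ S q / 2 ^ p) ^ 2)
      with (Rabs c * (incr_const A * Kv * Kw)) by (rewrite Hc; ring).
    apply mnorm_mscal_scaled; [apply Rmult_le_pos; apply pow_le; lra|].
    apply mnorm_mmul_scaled; [apply pow_le; lra | apply pow_le; lra | |].
    + apply (dyadic_bound_incr n d A v Kv); [lra | assumption..].
    + apply Hw; assumption.
Qed.

Definition comm_const : R :=
  incr_const A / 2 + corr_const A B + (incr_const A + 2 * corr_const A B) / 2 / (4 / (A * B) - 1).

Lemma comm_const_pos : 0 < comm_const.
Proof.
  pose proof incr_const_pos; pose proof corr_const_pos; pose proof four_div_gt_1.
  unfold comm_const. assert (0 < (incr_const A + 2 * corr_const A B) / 2 / (4 / (A * B) - 1))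
    by (repeat apply Rdiv_lt_0_compat; lra).
  lra.
Qed.

Section Commutator.

Variables (n m d : nat) (u v w : R -> Mat) (Ku Kv Kw : R).
Hypothesis Hu : sup_bound m n u Ku.
Hypothesis Hv : dyadic_bound n d A v Kv.
Hypothesis Hw : dyadic_bound d 1 B w Kw.

Local Notation uv := (fun s => mmul n (u s) (v s)).
Local Notation Pvw := (paraprod d v w).

Lemma sdiff_commutator p k : (k < 2 ^ p)%nat ->
  sdiff (fun t => msub (paraprod n u Pvw t) (paraprod d uv w t)) p k =
  msub (msub (mmul d (msub (mmul n (S_below p u (t1 p (S k))) (S_below p v (t1 p (S k))))
                           (S_below p uv (t1 p (S k)))) (sdiff w p k))
             (mmul n (S_below p u (t1 p (S k))) (para_corr d v w p k)))
       (msub (para_corr n u Pvw p k) (para_corr d uv w p k)).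
Proof.
  intros Hk. rewrite sdiff_msub, !sdiff_paraprod by assumption.
  rewrite !mmul_msub_r, !mmul_msub_l, <- mmul_assoc. mat_ext. unfold msub. ring.
Qed.

Lemma commutator_main_bound p k : (k < 2 ^ p)%nat ->
  (A * B) ^ p * mnorm m 1 (mmul d (msub (mmul n (S_below p u (t1 p (S k))) (S_below p v (t1 p (S k))))
                                     (S_below p uv (t1 p (S k)))) (sdiff w p k))
  <= incr_const A / 2 * Ku * Kv * Kw.
Proof.
  intros Hk. pose proof (sup_bound_nonneg _ _ _ _ Hu). pose proof (dyadic_bound_nonneg _ _ _ _ _ Hv).
  pose proof (dyadic_bound_nonneg _ _ _ _ _ Hw). pose proof incr_const_pos.
  destruct p as [|p].
  - rewrite !S_below_0.
    replace (msub (mmul n (u 0) (v 0)) (mmul n (u 0) (v 0))) with mzero by (mat_ext; mat_unfold; ring).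
    rewrite mmul_zero_l, mnorm_zero, Rmult_0_r.
    apply Rmult_le_pos; [apply Rmult_le_pos; [apply Rmult_le_pos|] |]; lra.
  - rewrite !S_below_t1 by (lia || assumption). rewrite mean_mmul_sub_mean.
    fold (incr u (S p) k) (incr v (S p) k).
    rewrite Rpow_mult_distr.
    replace (incr_const A / 2 * Ku * Kv * Kw) with ((Rabs (- / 4) * (2 * Ku * (incr_const A * Kv))) * Kw)
      by (rewrite Rabs_Ropp, Rabs_pos_eq by lra; field).
    apply mnorm_mmul_scaled; [apply pow_le; lra | apply pow_le; lra | | apply Hw; assumption].
    apply mnorm_mscal_scaled; [apply pow_le; lra|].
    apply mnorm_mmul_scaled_r; [apply pow_le; lra | apply (sup_bound_incr m n u Ku); assumption |].
    apply (dyadic_bound_incr n d A v Kv); [lra | assumption..].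
Qed.

Lemma commutator_corr_bound p k : (k < 2 ^ p)%nat ->
  (A * B) ^ p * mnorm m 1 (mmul n (S_below p u (t1 p (S k))) (para_corr d v w p k))
  <= Ku * (corr_const A B * Kv * Kw).
Proof.
  intros Hk. apply mnorm_mmul_scaled_r; [apply AB_pow_nonneg | |].
  - apply (sup_bound_S_below_t1 m n u Ku); assumption.
  - apply para_corr_bound; assumption.
Qed.

(* The coefficient of the inner paraproduct cancels against that of [uv] up to a
   product of increments of [v] and the correction term of [Pvw]. *)
Lemma commutator_block_bound q K : (1 <= q)%nat -> (K < 2 ^ q)%nat ->
  (A * B) ^ q * mnorm m 1 (msub (mmul n (incr u q K) (sdiff Pvw q K))
                                (mmul d (incr uv q K) (sdiff w q K)))
  <= (incr_const A + 2 * corr_const A B) * Ku * Kv * Kw.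
Proof.
  intros Hq HK. pose proof (sup_bound_nonneg _ _ _ _ Hu). pose proof (dyadic_bound_nonneg _ _ _ _ _ Hv).
  pose proof (dyadic_bound_nonneg _ _ _ _ _ Hw). pose proof incr_const_pos.
  pose proof corr_const_pos. pose proof (AB_pow_nonneg q).
  rewrite sdiff_paraprod, S_below_t1 by assumption. unfold incr at 1 2.
  rewrite commutator_block_identity. fold (incr v q K) (incr u q K).
  eapply Rle_trans; [apply Rmult_le_compat_l; [assumption | apply mnorm_sub]|].
  rewrite Rmult_plus_distr_l.
  replace ((incr_const A + 2 * corr_const A B) * Ku * Kv * Kw) with
    ((Rabs (- / 2) * (2 * Ku * (incr_const A * Kv))) * Kw + 2 * Ku * (corr_const A B * Kv * Kw))
    by (rewrite Rabs_Ropp, Rabs_pos_eq by lra; field).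
  apply Rplus_le_compat.
  - rewrite Rpow_mult_distr.
    apply mnorm_mmul_scaled; [apply pow_le; lra | apply pow_le; lra | | apply Hw; assumption].
    apply mnorm_mscal_scaled; [apply pow_le; lra|].
    apply mnorm_mmul_scaled_r; [apply pow_le; lra | |
      apply (dyadic_bound_incr n d A v Kv); [lra | assumption..]].
    destruct (t_in01 q K HK) as [Ht0 [_ Ht2]].
    eapply Rle_trans; [apply mnorm_add|]. pose proof (Hu _ Ht0); pose proof (Hu _ Ht2). lra.
  - apply mnorm_mmul_scaled_r; [assumption | | apply para_corr_bound; assumption].
    apply (sup_bound_incr m n u Ku); assumption.
Qed.

Lemma commutator_corr_diff_bound p k : (k < 2 ^ p)%nat ->
  (A * B) ^ p * mnorm m 1 (msub (para_corr n u Pvw p k) (para_corr d uv w p k))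
  <= (incr_const A + 2 * corr_const A B) / 2 / (4 / (A * B) - 1) * Ku * Kv * Kw.
Proof.
  intros Hk. pose proof (sup_bound_nonneg _ _ _ _ Hu). pose proof (dyadic_bound_nonneg _ _ _ _ _ Hv).
  pose proof (dyadic_bound_nonneg _ _ _ _ _ Hw). pose proof incr_const_pos.
  pose proof corr_const_pos. pose proof four_div_gt_1.
  set (Y := (incr_const A + 2 * corr_const A B) * Ku * Kv * Kw).
  assert (HY : 0 <= Y) by (unfold Y; apply Rmult_le_pos; [apply Rmult_le_pos; [apply Rmult_le_pos|] |]; lra).
  replace ((incr_const A + 2 * corr_const A B) / 2 / (4 / (A * B) - 1) * Ku * Kv * Kw)
    with (Rabs (/2) * (Y / (4 / (A * B) - 1))) by (rewrite Rabs_pos_eq by lra; unfold Y; field; lra).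
  unfold para_corr. rewrite msub_mscal, <- msum_msub.
  apply mnorm_mscal_scaled; [apply AB_pow_nonneg|].
  apply dyadic_sum_bound; [nra | assumption |].
  intros q Hq. destruct q as [|q].
  - rewrite !incr_S_below_0, !mmul_zero_l.
    replace (msub mzero mzero) with mzero by (mat_ext; mat_unfold; ring).
    rewrite mnorm_zero, Rmult_0_r. apply Rmult_le_pos; [assumption | apply pow2_ge_0].
  - destruct (incr_mmul_coarse (S q) p k ltac:(lia) Hq Hk) as [K [c [HK [Hc Hprod]]]].
    rewrite !Hprod, msub_mscal.
    replace (Y * (2 ^ S q / 2 ^ p) ^ 2) with (Rabs c * Y) by (rewrite Hc; ring).
    apply mnorm_mscal_scaled; [apply AB_pow_nonneg|].
    apply commutator_block_bound; [lia | assumption].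
Qed.

Lemma sdiff_commutator_bound p k : (k < 2 ^ p)%nat ->
  (A * B) ^ p * mnorm m 1 (sdiff (fun t => msub (paraprod n u Pvw t) (paraprod d uv w t)) p k)
  <= comm_const * Ku * Kv * Kw.
Proof.
  intros Hk. rewrite sdiff_commutator by assumption.
  pose proof (commutator_main_bound p k Hk). pose proof (commutator_corr_bound p k Hk).
  pose proof (commutator_corr_diff_bound p k Hk).
  eapply Rle_trans.
  { apply Rmult_le_compat_l; [apply AB_pow_nonneg|].
    eapply Rle_trans; [apply mnorm_sub | apply Rplus_le_compat_r, mnorm_sub]. }
  rewrite !Rmult_plus_distr_l. unfold comm_const. lra.
Qed.

End Commutator.

End Estimates.

Lemma commutator_at_0 n d (u v w : R -> Mat) :
  msub (paraprod n u (paraprod d v w) 0) (paraprod d (fun s => mmul n (u s) (v s)) w 0) = mzero.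
Proof. rewrite !paraprod_at_0. mat_ext; mat_unfold; ring. Qed.

Lemma commutator_at_1 n d (u v w : R -> Mat) :
  msub (paraprod n u (paraprod d v w) 1) (paraprod d (fun s => mmul n (u s) (v s)) w 1) = mzero.
Proof.
  rewrite !paraprod_at_1, paraprod_at_0, mmul_assoc.
  replace (msub (mmul d (v 0) (msub (w 1) (w 0))) mzero) with (mmul d (v 0) (msub (w 1) (w 0)))
    by (mat_ext; mat_unfold; ring).
  mat_ext; mat_unfold; ring.
Qed.

Theorem mainTheorem10 :
  forall alpha beta : R, 0 < alpha < 1 -> 0 < beta < 1 ->
  exists C : R, 0 < C /\
  forall (n m d : nat) (u v w : R -> Mat) (Ku Kv Kw : R),
    cont01 m n u -> cont01 n d v -> cont01 d 1 w ->
    sup_bound m n u Ku ->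
    holder_bound n d alpha v Kv ->
    holder_bound d 1 beta w Kw ->
    holder_bound m 1 (alpha + beta)
      (fun t => msub (paraprod n u (paraprod d v w) t)
                     (paraprod d (fun s => mmul n (u s) (v s)) w t))
      (C * Ku * Kv * Kw).
Proof.
  intros alpha beta Ha Hb.
  pose proof (Rpower_2_bounds alpha Ha); pose proof (Rpower_2_bounds beta Hb).
  set (A := Rpower 2 alpha) in *; set (B := Rpower 2 beta) in *.
  assert (HA : 0 < A < 2) by lra. assert (HB : 0 < B) by lra. assert (HAB : A * B < 4) by nra.
  pose proof (comm_const_pos A B HA HB HAB) as HC.
  exists (comm_const A B + 1). split; [lra|].
  (* Continuity is not needed: only values at dyadic points enter, and there the
     paraproducts are finite sums. *)
  intros n m d u v w Ku Kv Kw _ _ _ Hu Hv Hw.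
  apply holder_dyadic_bound in Hv, Hw.
  assert (HK : 0 <= Ku * Kv * Kw).
  { pose proof (sup_bound_nonneg _ _ _ _ Hu).
    pose proof (dyadic_bound_nonneg _ _ _ _ _ Hv); pose proof (dyadic_bound_nonneg _ _ _ _ _ Hw).
    apply Rmult_le_pos; [apply Rmult_le_pos|]; assumption. }
  apply dyadic_holder_bound; [lra | | split]; cbv beta.
  - rewrite commutator_at_0, mnorm_zero. nra.
  - rewrite commutator_at_0, commutator_at_1.
    replace (msub mzero mzero) with mzero by (mat_ext; mat_unfold; ring).
    rewrite mnorm_zero. nra.
  - intros p k Hk. rewrite Rpower_plus. fold A B.
    eapply Rle_trans; [exact (sdiff_commutator_bound A B HA HB HAB _ _ _ _ _ _ _ _ _ Hu Hv Hw p k Hk) | nra].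
Qed.
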